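(* Let $d\ge c\ge 1$ be integers and let $W\in\mathbb{R}^{c\times d}$ satisfy $WW^T=I_c$. Let $\Sigma\in\mathbb{R}^{c\times c}$ be symmetric positive definite and let $R\in\mathcal{O}(c)$ be an orthogonal matrix such that every diagonal coefficient of $R\Sigma R^T$ equals $\operatorname{Tr}(\Sigma)/c$. Let $\epsilon>0$ and let $x_{t_1},x_{t_2}$ be random vectors in $\mathbb{R}^d$ such that $Wx_{t_1}\sim\mathcal{N}(\mathbf{0},\Sigma)$, $Wx_{t_2}\sim\mathcal{N}(\mathbf{0},\Sigma)$ and $\|x_{t_1}-x_{t_2}\|_2\le\epsilon$ almost surely. Let $b_{t_j}=\operatorname{sign}(RWx_{t_j})\in\{-1,1\}^c$ for $j\in\{1,2\}$. Then $$\mathbb{P}\big[\operatorname{dist}_H(b_{t_1},b_{t_2})>0\big]\ \le\ 2\epsilon\sqrt{\frac{2}{\pi}}\;c^{3/2}\,\big(\operatorname{Tr}(\Sigma)\big)^{-1/2}.$$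
   Context: $\operatorname{sign}(x)=1$ if $x\ge 0$ and $-1$ otherwise, applied component-wise to vectors. $\operatorname{dist}_H$ is the Hamming distance (number of coordinates in which two vectors differ). $\mathcal{O}(c)$ is the set of $c\times c$ real orthogonal matrices; $\operatorname{Tr}$ is the trace; $I_c$ is the $c\times c$ identity matrix. *)

From HB Require Import structures.
From mathcomp Require Import all_boot all_order all_algebra.
From mathcomp Require Import all_classical all_reals all_analysis.
Set Implicit Arguments. Unset Strict Implicit. Unset Printing Implicit Defensive.
Import Order.TTheory GRing.Theory Num.Theory.
Local Open Scope classical_set_scope.
Local Open Scope ring_scope.

Definition sgn {R : realType} (x : R) : R := if 0 <= x then 1 else -1.

Definition sign_vec {R : realType} (n : nat) (v : 'cV[R]_n) : 'cV[R]_n :=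
  \col_i sgn (v i 0).

Definition dist_H {R : realType} (n : nat) (u v : 'cV[R]_n) : nat :=
  #|[set i : 'I_n | u i 0 != v i 0]|.

Definition norm2 {R : realType} (n : nat) (v : 'cV[R]_n) : R :=
  Num.sqrt (\sum_i (v i 0) ^+ 2).

Definition is_symmetric {R : realType} (n : nat) (S : 'M[R]_n) : Prop := S^T = S.

Definition is_pos_def {R : realType} (n : nat) (S : 'M[R]_n) : Prop :=
  is_symmetric S /\ forall u : 'cV[R]_n, u != 0 -> 0 < (u^T *m S *m u) 0 0.

Definition is_orthogonal_mx {R : realType} (n : nat) (Q : 'M[R]_n) : Prop :=
  Q *m Q^T = 1%:M /\ Q^T *m Q = 1%:M.

Definition random_vector {dT : measure_display} {T : measurableType dT}
  {R : realType} (n : nat) (Y : T -> 'cV[R]_n) : Prop :=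
  forall i, measurable_fun setT (fun w => Y w i 0).

(* Y ~ N(0, S) (S positive definite): every nonzero linear functional
   u^T Y is real normal with mean 0 and variance u^T S u
   (the standard Cramer-Wold definition of the multivariate Gaussian). *)
Definition gaussian0 {dT : measure_display} {T : measurableType dT}
  {R : realType} (P : probability T R) (n : nat) (Y : T -> 'cV[R]_n)
  (S : 'M[R]_n) : Prop :=
  random_vector Y /\
  forall u : 'cV[R]_n, u != 0 -> forall A : set R, measurable A ->
    P [set w | (u^T *m Y w) 0 0 \in A] =
    normal_prob 0 (Num.sqrt ((u^T *m S *m u) 0 0)) A.

From HB Require Import structures.
From mathcomp Require Import all_boot all_order all_algebra.
From mathcomp Require Import all_classical all_reals all_analysis.
From mathcomp Require Import measurable_realfun ring lra.

(* If the signs of coordinate i of [Q W x1] and [Q W x2] differ, that coordinate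
   of [Q W x1] lies within eps of 0: the rows of [Q W] are unit vectors, so by
   Cauchy-Schwarz the two coordinates differ by at most |x1 - x2| <= eps.  Each
   coordinate of [Q W x1] is a centred normal variable of variance
   (Q Sigma Q^T)_ii = Tr(Sigma)/c, hence falls in [-eps, eps] with probability at
   most 2 eps times the peak (2 pi Tr(Sigma)/c)^(-1/2) of its density.  A union
   bound over the c coordinates concludes. *)

Set Implicit Arguments.
Unset Strict Implicit.
Unset Printing Implicit Defensive.

Import Order.TTheory GRing.Theory Num.Theory.
Local Open Scope classical_set_scope.
Local Open Scope ring_scope.

Lemma sgn_neq_abs_le (R : realType) (a b e : R) :
  sgn a != sgn b -> `|a - b| <= e -> `|a| <= e.
Proof.
rewrite /sgn; case: (lerP 0 a) => a0; case: (lerP 0 b) => b0;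
  rewrite ?eqxx // => _; rewrite !ler_norml => /andP[]; lra.
Qed.

Lemma dist_H_sign_vec_gt0 (R : realType) (n : nat) (u v : 'cV[R]_n) :
  (0 < dist_H (sign_vec u) (sign_vec v))%N = [exists i, sgn (u i 0) != sgn (v i 0)].
Proof.
apply/card_gt0P/existsP => -[i].
  by rewrite inE /= !mxE => flip; exists i.
by move=> flip; exists i; rewrite inE /= !mxE.
Qed.

Lemma sum_sqr_row_orthonormal (R : pzSemiRingType) (m n : nat) (M : 'M[R]_(m, n)) :
  M *m M^T = 1%:M -> forall i, \sum_k M i k ^+ 2 = 1.
Proof.
move=> + i => /matrixP /(_ i i); rewrite !mxE eqxx => MMi; rewrite -[RHS]MMi.
by apply: eq_bigr => k _; rewrite mxE expr2.
Qed.

Lemma row_orthonormal_neq0 (R : nzSemiRingType) (m n : nat) (M : 'M[R]_(m, n)) :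
  M *m M^T = 1%:M -> forall i, row i M != 0.
Proof.
move=> MMt i; apply/eqP => Mi0.
have := congr1 (row i) MMt; rewrite row_mul Mi0 mul0mx => /rowP /(_ i).
by rewrite !mxE eqxx => /esym /eqP; rewrite mulr1n oner_eq0.
Qed.

Lemma quad_form_row (R : pzSemiRingType) (m n : nat) (Q : 'M[R]_(m, n)) (S : 'M[R]_n) i :
  (row i Q *m S *m (row i Q)^T) 0 0 = (Q *m S *m Q^T) i i.
Proof. by rewrite -row_mul [LHS]mxE [RHS]mxE; apply: eq_bigr => j _; rewrite !mxE. Qed.

Lemma quad_form_row_gt0 (R : realType) (m n : nat) (Q : 'M[R]_(m, n)) (S : 'M[R]_n) i :
  is_pos_def S -> row i Q != 0 -> 0 < (Q *m S *m Q^T) i i.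
Proof.
move=> [_ Spos] Qi0; have := Spos (row i Q)^T.
by rewrite trmx_eq0 trmxK quad_form_row => /(_ Qi0).
Qed.

Lemma abs_dot_le_unit (R : realFieldType) (n : nat) (a b : 'I_n -> R) (e : R) :
  0 < e -> \sum_k a k ^+ 2 = 1 -> \sum_k b k ^+ 2 <= e ^+ 2 ->
  `|\sum_k a k * b k| <= e.
Proof.
move=> e0 a1.
have dot_le b' : \sum_k b' k ^+ 2 <= e ^+ 2 -> \sum_k a k * b' k <= e.
  move=> b'e; rewrite -(ler_pM2l (mulr_gt0 (ltr0Sn _ 1) e0)) mulr_sumr.
  (* AM-GM: [2 e a_k b_k <= e^2 a_k^2 + b_k^2] *)
  apply: (le_trans (y := \sum_k (e ^+ 2 * a k ^+ 2 + b' k ^+ 2))).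
    by apply: ler_sum => k _; have := sqr_ge0 (e * a k - b' k); lra.
  by rewrite big_split /= -mulr_sumr a1; lra.
move=> be; rewrite ler_norml dot_le // andbT lerNl -sumrN.
under eq_bigr do rewrite -mulrN.
by apply: dot_le; under eq_bigr do rewrite sqrrN.
Qed.

Lemma sum_sqr_le_norm2 (R : realType) (n : nat) (v : 'cV[R]_n) (e : R) :
  norm2 v <= e -> \sum_k v k 0 ^+ 2 <= e ^+ 2.
Proof.
have v0 : 0 <= \sum_k v k 0 ^+ 2 by apply: sumr_ge0 => k _; exact: sqr_ge0.
move=> ve; rewrite -(sqr_sqrtr v0) ler_sqr ?nnegrE ?sqrtr_ge0 //.
exact: le_trans (sqrtr_ge0 _) ve.
Qed.

Lemma sign_flip_coord_le (R : realType) (c n : nat) (M : 'M[R]_(c, n))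
    (x y : 'cV[R]_n) (e : R) i :
  M *m M^T = 1%:M -> 0 < e -> norm2 (x - y) <= e ->
  sgn ((M *m x) i 0) != sgn ((M *m y) i 0) -> `|(M *m x) i 0| <= e.
Proof.
move=> MMt e0 xye flip; apply: sgn_neq_abs_le flip _.
have -> : (M *m x) i 0 - (M *m y) i 0 = \sum_k M i k * (x - y) k 0.
  by rewrite !mxE -sumrB; apply: eq_bigr => k _; rewrite !mxE mulrBr.
apply: abs_dot_le_unit e0 (sum_sqr_row_orthonormal MMt i) _.
exact: sum_sqr_le_norm2.
Qed.

Lemma measurable_sgn (R : realType) : measurable_fun setT (@sgn R).
Proof.
apply: measurable_fun_ifT => //.
exact: measurable_fun_ler.
Qed.

Lemma measurable_sgn_neq d (T : measurableType d) (R : realType) (f g : T -> R) :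
  measurable_fun setT f -> measurable_fun setT g ->
  measurable [set w | sgn (f w) != sgn (g w)].
Proof.
move=> mf mg.
have mfg : measurable_fun setT (fun w => sgn (f w) == sgn (g w)).
  by apply: measurable_fun_eqr; apply: measurableT_comp (@measurable_sgn R) _.
rewrite -[X in measurable X]setTI.
exact: (measurable_neg mfg measurableT (Y := [set true])).
Qed.

Lemma measurable_mulmx_coord d (T : measurableType d) (R : realType)
    (m n : nat) (M : 'M[R]_(m, n)) (Y : T -> 'cV[R]_n) (i : 'I_m) :
  random_vector Y -> measurable_fun setT (fun w => (M *m Y w) i 0).
Proof.
move=> mY; under eq_fun do rewrite mxE.
by apply: measurable_sum => k; exact: measurable_funM.
Qed.

Lemma measure_bigsetU_le d (T : measurableType d) (R : realType)
    (mu : {measure set T -> \bar R}) (I : Type) (s : seq I) (A : I -> set T) :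
  (forall i, measurable (A i)) ->
  (mu (\big[setU/set0]_(i <- s) A i) <= \sum_(i <- s) mu (A i))%E.
Proof.
move=> mA; elim: s => [|a s IH]; first by rewrite !big_nil measure0.
rewrite !big_cons; apply: le_trans (measureU2 _ _ _) (leeD _ IH) => //.
exact: bigsetU_measurable.
Qed.

Lemma sign_flip_measure_le d (T : measurableType d) (R : realType)
    (mu : {measure set T -> \bar R}) (c n : nat) (M : 'M[R]_(c, n))
    (y1 y2 : T -> 'cV[R]_n) (e p : R) :
  M *m M^T = 1%:M -> 0 < e -> random_vector y1 -> random_vector y2 ->
  (forall i, mu [set w | (`|(M *m y1 w) i 0| <= e)%R] <= p%:E)%E ->
  {ae mu, forall w, norm2 (y1 w - y2 w) <= e} ->
  (mu [set w | (0 < dist_H (sign_vec (M *m y1 w)) (sign_vec (M *m y2 w)))%N]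
   <= (c%:R * p)%:E)%E.
Proof.
move=> MMt e0 my1 my2 small_le [N [mN N0 closeN]].
pose flip i := [set w | sgn ((M *m y1 w) i 0) != sgn ((M *m y2 w) i 0)].
pose small i := [set w | `|(M *m y1 w) i 0| <= e].
have msmall i : measurable (small i).
  rewrite -[X in measurable X]setTI.
  apply: (measurable_fun_ler _ (measurable_cst e) measurableT (Y := [set true])) => //.
  by apply: measurableT_comp; [exact: normr_measurable | exact: measurable_mulmx_coord].
have msmallU : measurable (\big[setU/set0]_(i < c) small i).
  exact: bigsetU_measurable.
have mflipU : measurable (\big[setU/set0]_(i < c) flip i).
  apply: bigsetU_measurable => i _.
  by apply: measurable_sgn_neq; exact: measurable_mulmx_coord.
have flip_sub : \big[setU/set0]_(i < c) flip i `<=` N `|` \big[setU/set0]_(i < c) small i.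
  move=> w; rewrite -bigcup_seq => -[i _ fi].
  have [Nw|nNw] := pselect (N w); [by left | right].
  rewrite -bigcup_seq; exists i; first exact: mem_index_enum.
  apply: sign_flip_coord_le MMt e0 _ fi.
  by apply/negPn/negP => /negP /closeN.
have -> : [set w | (0 < dist_H (sign_vec (M *m y1 w)) (sign_vec (M *m y2 w)))%N]
          = \big[setU/set0]_(i < c) flip i.
  apply/seteqP; split => w; rewrite /= dist_H_sign_vec_gt0 -bigcup_seq.
    by move=> /existsP[i fi]; exists i => //=; exact: mem_index_enum.
  by move=> [i _ fi]; apply/existsP; exists i.
apply: (le_trans (y := mu (N `|` \big[setU/set0]_(i < c) small i))).
  by apply: le_measure; rewrite ?inE //; exact: measurableU.
apply: le_trans (measureU2 mu mN msmallU) _.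
rewrite [X in (X + _)%E](_ : _ = 0%E) ?add0e; last exact: N0.
apply: le_trans (measure_bigsetU_le mu (index_enum 'I_c) msmall) _.
have -> : (c%:R * p)%:E = \sum_(i < c) p%:E.
  by rewrite sumEFin sumr_const card_ord mulr_natl.
by apply: lee_sum => i _; exact: small_le.
Qed.

Lemma normal_prob_itv_le (R : realType) (m s a b : R) : s != 0 -> a <= b ->
  (normal_prob m s `[a, b] <= ((b - a) * normal_peak s)%:E)%E.
Proof.
move=> s0 ab; rewrite /normal_prob.
apply: (@le_trans _ _ (\int[lebesgue_measure]_(x in `[a, b]) (normal_peak s)%:E))%E.
  apply: ge0_le_integral => //=.
  - by move=> x _; rewrite lee_fin normal_pdf_ge0.
  - by apply/measurable_EFinP/measurable_funTS; exact: measurable_normal_pdf.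
  - by move=> x _; rewrite lee_fin normal_pdf_ub.
rewrite integral_cst //= lebesgue_measure_itv /= lte_fin.
case: ifPn => _; first by rewrite -EFinD -EFinM mulrC.
by rewrite mule0 lee_fin mulr_ge0 ?subr_ge0 ?normal_peak_ge0.
Qed.

Lemma normal_peak_sqrt (R : realType) (v : R) : 0 < v ->
  normal_peak (Num.sqrt v) = Num.sqrt (2 / pi) / (2 * Num.sqrt v).
Proof.
move=> v0; rewrite /normal_peak sqr_sqrtr ?ltW //.
move: (pi : R) (pi_gt0 R) => p p0.
have p2_0 : 0 < p *+ 2 by rewrite mulrn_wgt0.
have s0 : 0 < Num.sqrt (p *+ 2) by rewrite sqrtr_gt0.
have sv0 : 0 < Num.sqrt v by rewrite sqrtr_gt0.
have -> : 2 / p = (2 / Num.sqrt (p *+ 2)) ^+ 2.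
  rewrite expr_div_n sqr_sqrtr ?ltW // -mulr_natr.
  by field; rewrite gt_eqF.
rewrite sqrtr_sqr ger0_norm ?divr_ge0 ?ltW // -mulrnAr sqrtrM ?ltW //.
by field; rewrite !gt_eqF.
Qed.

Lemma gaussian0_coord d (T : measurableType d) (R : realType) (P : probability T R)
    (m n : nat) (Y : T -> 'cV[R]_n) (S : 'M[R]_n) (Q : 'M[R]_(m, n)) i (A : set R) :
  gaussian0 P Y S -> row i Q != 0 -> measurable A ->
  P [set w | (Q *m Y w) i 0 \in A] =
  normal_prob 0 (Num.sqrt ((Q *m S *m Q^T) i i)) A.
Proof.
move=> [_ YS] Qi0 mA; rewrite -quad_form_row.
have := YS (row i Q)^T; rewrite trmx_eq0 trmxK => /(_ Qi0 A mA) <-.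
have rowQY w : (row i Q *m Y w) 0 0 = (Q *m Y w) i 0 by rewrite -row_mul [LHS]mxE.
by congr (P _); apply/seteqP; split => w /=; rewrite rowQY.
Qed.

Lemma gaussian0_coord_abs_le d (T : measurableType d) (R : realType)
    (P : probability T R) (m n : nat) (Y : T -> 'cV[R]_n) (S : 'M[R]_n)
    (Q : 'M[R]_(m, n)) i (e : R) :
  gaussian0 P Y S -> is_pos_def S -> row i Q != 0 -> 0 <= e ->
  (P [set w | (`|(Q *m Y w) i 0| <= e)%R]
   <= (2 * e * normal_peak (Num.sqrt ((Q *m S *m Q^T) i i)))%:E)%E.
Proof.
move=> YS Spd Qi0 e0.
have -> : [set w | `|(Q *m Y w) i 0| <= e]
          = [set w | (Q *m Y w) i 0 \in `[- e, e]%classic].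
  by apply/seteqP; split => w; rewrite /= inE /= in_itv /= ler_norml.
rewrite (gaussian0_coord YS Qi0) //; apply: le_trans (normal_prob_itv_le 0 _ _) _.
- by rewrite gt_eqF ?sqrtr_gt0 ?quad_form_row_gt0.
- by lra.
by have -> : e - - e = 2 * e by ring.
Qed.

(* The union bound actually yields half of the constant of the statement. *)
Lemma natr_mul_normal_peak_le (R : realType) (n : nat) (e t : R) :
  (0 < n)%N -> 0 <= e -> 0 < t / n%:R ->
  n%:R * (2 * e * normal_peak (Num.sqrt (t / n%:R)))
  <= 2 * e * Num.sqrt (2 / pi) * (n%:R * Num.sqrt n%:R) * (Num.sqrt t)^-1.
Proof.
move=> n0 e0 tn_gt0.
have n_gt0 : 0 < n%:R :> R by rewrite ltr0n.
have t_gt0 : 0 < t by have := mulr_gt0 tn_gt0 n_gt0; rewrite divfK ?gt_eqF.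
have bound (a s u q : R) : 0 <= a -> 0 < u -> 0 < q -> s = u / q ->
    n%:R * (2 * e * (a / (2 * s))) <= 2 * e * a * (n%:R * q) / u.
  move=> a_ge0 u_gt0 q_gt0 ->.
  have -> : n%:R * (2 * e * (a / (2 * (u / q)))) = n%:R * e * a * q / u.
    by field; rewrite ?gt_eqF.
  have -> : 2 * e * a * (n%:R * q) / u = 2 * (n%:R * e * a * q / u).
    by field; rewrite ?gt_eqF.
  suff : 0 <= n%:R * e * a * q / u by lra.
  apply: divr_ge0 (ltW u_gt0); apply: mulr_ge0 (ltW q_gt0).
  by apply: mulr_ge0 a_ge0; exact: mulr_ge0 (ler0n _ _) e0.
rewrite normal_peak_sqrt //; apply: bound; rewrite ?sqrtr_ge0 ?sqrtr_gt0 //.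
by rewrite sqrtrM ?sqrtrV ?ler0n //; exact: ltW.
Qed.

Theorem theorem2 (R : realType) (c d : nat) (hc : (1 <= c)%N) (hcd : (c <= d)%N)
  (W : 'M[R]_(c, d)) (hW : W *m W^T = 1%:M)
  (Sigma : 'M[R]_c) (hS : is_pos_def Sigma)
  (Q : 'M[R]_c) (hQ : is_orthogonal_mx Q)
  (hdiag : forall i : 'I_c, (Q *m Sigma *m Q^T) i i = \tr Sigma / c%:R)
  (eps : R) (heps : 0 < eps)
  (dT : measure_display) (T : measurableType dT) (P : probability T R)
  (x1 x2 : T -> 'cV[R]_d)
  (hx1 : random_vector x1) (hx2 : random_vector x2)
  (hg1 : gaussian0 P (fun w => W *m x1 w) Sigma)
  (hg2 : gaussian0 P (fun w => W *m x2 w) Sigma)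
  (hclose : {ae P, forall w, norm2 (x1 w - x2 w) <= eps}) :
  (P [set w | (0 < dist_H (sign_vec (Q *m W *m x1 w))
                          (sign_vec (Q *m W *m x2 w)))%N]
   <= (2 * eps * Num.sqrt (2 / pi) * (c%:R * Num.sqrt c%:R)
       * (Num.sqrt (\tr Sigma))^-1)%:E)%E.
Proof.
have QWt : Q *m W *m (Q *m W)^T = 1%:M.
  by rewrite trmx_mul mulmxA -(mulmxA Q) hW mulmx1 hQ.1.
have Qi0 i : row i Q != 0 := row_orthonormal_neq0 hQ.1 i.
have coord_small i : (P [set w | (`|(Q *m W *m x1 w) i 0| <= eps)%R]
    <= (2 * eps * normal_peak (Num.sqrt (\tr Sigma / c%:R)))%:E)%E.
  rewrite -(hdiag i) (_ : [set w | _] = [set w | `|(Q *m (W *m x1 w)) i 0| <= eps]).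
    exact: gaussian0_coord_abs_le hg1 hS (Qi0 i) (ltW heps).
  by apply/seteqP; split => w /=; rewrite mulmxA.
apply: le_trans (sign_flip_measure_le QWt heps hx1 hx2 coord_small hclose) _.
rewrite lee_fin natr_mul_normal_peak_le ?(ltW heps) //.
by rewrite -(hdiag (Ordinal hc)) quad_form_row_gt0.
Qed.
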